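(* Let $\mathcal{X}$ be a separable infinite-dimensional complex Banach space, $T\in\mathcal{B}(\mathcal{X})$, and $\mathcal{M}$ a nontrivial closed subspace of $\mathcal{X}$. Suppose there are an increasing sequence $(n_k)_{k\in\mathbb{N}}$ of positive integers and two subsets $D_1,D_2\subseteq\mathcal{M}$, each dense in $\mathcal{M}$, such that: (a) for every $y\in D_2$ there is a sequence $(x_k)_{k}$ in $\mathcal{M}$ with $\|x_k\|\to0$ and $T^{n_k}x_k\to y$ as $k\to\infty$; (b) for every $x\in D_1$ (and every $y\in D_2$ with the sequence $(x_k)$ from (a)), $\|T^{n_k}x\|\,\|x_k\|\to0$ as $k\to\infty$; (c) $T^{n_k}\mathcal{M}\subseteq\mathcal{M}$ for all $k$. Then $T$ is $\mathcal{M}$-diskcyclic.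
   Context: $\mathbb{D}=\{\alpha\in\mathbb{C}:|\alpha|\le1\}$. $T$ is $\mathcal{M}$-diskcyclic if there is $x\in\mathcal{X}$ such that $\{\alpha T^nx:\alpha\in\mathbb{D},\ n=0,1,2,\dots\}\cap\mathcal{M}$ is dense in $\mathcal{M}$. *)

From Stdlib Require Import Reals.
Open Scope R_scope.

Definition C : Type := (R * R)%type.
Definition C0 : C := (0, 0).
Definition C1 : C := (1, 0).
Definition Cplus (a b : C) : C := (fst a + fst b, snd a + snd b).
Definition Cmult (a b : C) : C :=
  (fst a * fst b - snd a * snd b, fst a * snd b + snd a * fst b).
Definition Cmod (a : C) : R := sqrt (fst a ^ 2 + snd a ^ 2).

Record CBanach : Type := {
  carrier :> Type;
  vzero : carrier;
  vadd : carrier -> carrier -> carrier;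
  vopp : carrier -> carrier;
  vscal : C -> carrier -> carrier;
  norm : carrier -> R;
  vadd_assoc : forall x y z, vadd x (vadd y z) = vadd (vadd x y) z;
  vadd_comm : forall x y, vadd x y = vadd y x;
  vadd_0 : forall x, vadd vzero x = x;
  vadd_opp : forall x, vadd x (vopp x) = vzero;
  vscal_assoc : forall a b x, vscal a (vscal b x) = vscal (Cmult a b) x;
  vscal_1 : forall x, vscal C1 x = x;
  vscal_distr_v : forall a x y, vscal a (vadd x y) = vadd (vscal a x) (vscal a y);
  vscal_distr_s : forall a b x, vscal (Cplus a b) x = vadd (vscal a x) (vscal b x);
  norm_nonneg : forall x, 0 <= norm x;
  norm_eq0 : forall x, norm x = 0 -> x = vzero;
  norm_scal : forall a x, norm (vscal a x) = Cmod a * norm x;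
  norm_triangle : forall x y, norm (vadd x y) <= norm x + norm y;
  complete : forall u : nat -> carrier,
    (forall eps, eps > 0 -> exists N : nat, forall p q, (p >= N)%nat -> (q >= N)%nat ->
        norm (vadd (u p) (vopp (u q))) < eps) ->
    exists l, Un_cv (fun k => norm (vadd (u k) (vopp l))) 0
}.

Arguments vzero {_}.
Arguments vadd {_} _ _.
Arguments vopp {_} _.
Arguments vscal {_} _ _.
Arguments norm {_} _.

Definition vsub {X : CBanach} (x y : X) : X := vadd x (vopp y).

Fixpoint lincomb {X : CBanach} (n : nat) (c : nat -> C) (v : nat -> X) : X :=
  match n with
  | O => vzero
  | S m => vadd (lincomb m c v) (vscal (c m) (v m))
  end.

Definition separable (X : CBanach) : Prop :=
  exists d : nat -> X, forall (x : X) eps, eps > 0 -> exists n, norm (vsub x (d n)) < eps.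

Definition infinite_dimensional (X : CBanach) : Prop :=
  forall n : nat, exists v : nat -> X,
    forall c : nat -> C, lincomb n c v = vzero -> forall i, (i < n)%nat -> c i = C0.

Definition bounded_linear {X : CBanach} (T : X -> X) : Prop :=
  (forall x y, T (vadd x y) = vadd (T x) (T y)) /\
  (forall a x, T (vscal a x) = vscal a (T x)) /\
  (exists K, forall x, norm (T x) <= K * norm x).

Definition closed_subspace {X : CBanach} (M : X -> Prop) : Prop :=
  M vzero /\
  (forall x y, M x -> M y -> M (vadd x y)) /\
  (forall a x, M x -> M (vscal a x)) /\
  (forall (u : nat -> X) l, (forall k, M (u k)) ->
      Un_cv (fun k => norm (vsub (u k) l)) 0 -> M l).

Definition nontrivial {X : CBanach} (M : X -> Prop) : Prop :=
  (exists x, M x /\ x <> vzero) /\ (exists x, ~ M x).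

Definition dense_in {X : CBanach} (D M : X -> Prop) : Prop :=
  (forall x, D x -> M x) /\
  (forall y, M y -> forall eps, eps > 0 -> exists x, D x /\ norm (vsub x y) < eps).

Definition M_diskcyclic {X : CBanach} (T : X -> X) (M : X -> Prop) : Prop :=
  exists x : X, forall y, M y -> forall eps, eps > 0 ->
    exists (a : C) (n : nat), Cmod a <= 1 /\ M (vscal a (Nat.iter n T x)) /\
      norm (vsub (vscal a (Nat.iter n T x)) y) < eps.

From Pilot Require Import Defs.
From Stdlib Require Import Reals Lra Lia ClassicalEpsilon Arith.Cantor.
Open Scope R_scope.

(* An M-diskcyclicity criterion, proved by a nested-ball (Baire-type) construction.

   Key step ([disk_approximation], [refinement_exists]): for [s] in D1 and a target
   [y] in D2, the vector [z = s + c x_k] (with [x_k] from hypothesis (a)) satisfies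
   [(1/c) T^(n_k) z ~ y] for a suitable [c >= 1], and by (b) [z] stays close to [s];
   since [(1/c) T^(n_k)] is Lipschitz, a whole small ball around a point of D1 near
   [z] is mapped close to [y].  Using separability, D2 contains a sequence dense in M
   ([dense_sequence_in]); enumerating all pairs (target, tolerance) we refine a chain
   of nested closed balls centred in D1, one stage per pair ([dependent_choice]).
   By completeness the balls meet in a point ([nested_balls]), which lies in M by
   closedness and, by (c), is an M-diskcyclic vector ([diskcyclic_of_stages]). *)

Local Notation dist x y := (norm (vsub x y)).

(* Elementary consequences of the axioms of a complex normed space.  The complex
   numbers of [Defs] are written [Defs.C] since [Reals] also exports a [C]. *)
Section VectorAlgebra.
Context {X : CBanach}.
Implicit Types x y z u v w : X.

Lemma Cpair_eq (a b c d : R) : a = c -> b = d -> ((a, b) : Defs.C) = (c, d).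
Proof. intros; subst; reflexivity. Qed.

Lemma Cmod_real (c : R) : Cmod (c, 0) = Rabs c.
Proof. unfold Cmod; simpl. rewrite <- sqrt_Rsqr_abs. f_equal. unfold Rsqr; ring. Qed.

Lemma Cmod_nonneg (a : Defs.C) : 0 <= Cmod a.
Proof. apply sqrt_pos. Qed.

Lemma vadd_0r x : vadd x vzero = x.
Proof. rewrite vadd_comm; apply vadd_0. Qed.

Lemma vscal_0 x : vscal Defs.C0 x = vzero.
Proof.
  assert (Hdouble : vscal Defs.C0 x = vadd (vscal Defs.C0 x) (vscal Defs.C0 x)).
  { rewrite <- vscal_distr_s. f_equal. apply Cpair_eq; simpl; ring. }
  assert (H := vadd_opp _ (vscal Defs.C0 x)).
  rewrite Hdouble in H at 1. rewrite <- vadd_assoc, vadd_opp, vadd_0r in H. exact H.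
Qed.

(* The additive inverse is scaling by -1; this reduces the algebra of [vopp]
   to the module axioms. *)
Lemma vopp_scal x : vopp x = vscal (-1, 0) x.
Proof.
  rewrite <- (vadd_0r (vscal (-1, 0) x)), <- (vadd_opp _ x), vadd_assoc.
  rewrite <- (vscal_1 _ x) at 3. rewrite <- vscal_distr_s.
  replace (Cplus (-1, 0) Defs.C1) with Defs.C0 by (apply Cpair_eq; simpl; ring).
  rewrite vscal_0. symmetry; apply vadd_0.
Qed.

Lemma norm_zero : norm (@vzero X) = 0.
Proof. rewrite <- (vscal_0 vzero), norm_scal; unfold Defs.C0; rewrite Cmod_real, Rabs_R0. ring. Qed.

Lemma vsub_self x : vsub x x = vzero.
Proof. apply vadd_opp. Qed.

Lemma vscal_sub a x y : vscal a (vsub x y) = vsub (vscal a x) (vscal a y).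
Proof.
  unfold vsub. rewrite vscal_distr_v, !vopp_scal, !vscal_assoc.
  do 2 f_equal. destruct a; apply Cpair_eq; simpl; ring.
Qed.

Lemma vsub_sym x y : vsub y x = vscal (-1, 0) (vsub x y).
Proof.
  unfold vsub. rewrite vscal_distr_v, !vopp_scal, vscal_assoc, vadd_comm.
  replace (Cmult (-1, 0) (-1, 0)) with Defs.C1 by (apply Cpair_eq; simpl; ring).
  rewrite vscal_1. reflexivity.
Qed.

Lemma dist_sym x y : dist y x = dist x y.
Proof. rewrite vsub_sym, norm_scal, Cmod_real, Rabs_left by lra. ring. Qed.

Lemma dist_tri u v w : dist u w <= dist u v + dist v w.
Proof.
  replace (vsub u w) with (vadd (vsub u v) (vsub v w)) by
    (unfold vsub; rewrite <- vadd_assoc, (vadd_assoc _ (vopp v)),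
       (vadd_comm _ (vopp v) v), vadd_opp, vadd_0; reflexivity).
  apply norm_triangle.
Qed.

Lemma vsub_addl x y z : vsub (vadd x y) z = vadd x (vsub y z).
Proof. unfold vsub; rewrite vadd_assoc; reflexivity. Qed.

Lemma vsub_add_self x w : vsub (vadd x w) x = w.
Proof. rewrite vadd_comm, vsub_addl, vsub_self. apply vadd_0r. Qed.

End VectorAlgebra.

Section Iterates.
Context {X : CBanach} (T : X -> X).
Hypothesis T_add : forall x y, T (vadd x y) = vadd (T x) (T y).
Hypothesis T_scal : forall a x, T (vscal a x) = vscal a (T x).

Lemma iter_add m x y : Nat.iter m T (vadd x y) = vadd (Nat.iter m T x) (Nat.iter m T y).
Proof. induction m as [|m IH]; simpl; [reflexivity | rewrite IH; apply T_add]. Qed.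

Lemma iter_scal m a x : Nat.iter m T (vscal a x) = vscal a (Nat.iter m T x).
Proof. induction m as [|m IH]; simpl; [reflexivity | rewrite IH; apply T_scal]. Qed.

Lemma iter_sub m x y : Nat.iter m T (vsub x y) = vsub (Nat.iter m T x) (Nat.iter m T y).
Proof. unfold vsub. rewrite iter_add, !vopp_scal, iter_scal. reflexivity. Qed.

Variable K : R.
Hypothesis T_bound : forall x, norm (T x) <= K * norm x.

(* [T^m] is bounded by [(max 1 K)^m]; using [max 1 K] avoids sign issues with [K]. *)
Lemma iter_bound m x : norm (Nat.iter m T x) <= Rmax 1 K ^ m * norm x.
Proof.
  induction m as [|m IH]; simpl; [lra|].
  assert (HK : K <= Rmax 1 K) by apply Rmax_r.
  assert (H1 : 1 <= Rmax 1 K) by apply Rmax_l.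
  assert (0 <= norm (Nat.iter m T x)) by apply norm_nonneg.
  apply Rle_trans with (K * norm (Nat.iter m T x)); [apply T_bound|].
  apply Rle_trans with (Rmax 1 K * norm (Nat.iter m T x)); [apply Rmult_le_compat_r; lra|].
  rewrite Rmult_assoc. apply Rmult_le_compat_l; lra.
Qed.

Lemma scaled_iter_lipschitz m a u v : Cmod a <= 1 ->
  dist (vscal a (Nat.iter m T u)) (vscal a (Nat.iter m T v)) <= Rmax 1 K ^ m * dist u v.
Proof.
  intro Ha.
  rewrite <- vscal_sub, <- iter_sub, norm_scal.
  assert (Hb := iter_bound m (vsub u v)).
  assert (0 <= norm (Nat.iter m T (vsub u v))) by apply norm_nonneg.
  assert (0 <= Cmod a) by apply Cmod_nonneg.
  nra.
Qed.

End Iterates.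

Lemma eventually_below (u : nat -> R) eps :
  Un_cv u 0 -> 0 < eps -> exists N, forall k, (k >= N)%nat -> u k < eps.
Proof.
  intros Hu He. destruct (Hu eps He) as [N HN]. exists N. intros k Hk.
  specialize (HN k Hk). unfold R_dist in HN. rewrite Rminus_0_r in HN.
  apply Rabs_def2 in HN. lra.
Qed.

Lemma halving_vanishes (rho : nat -> R) :
  (forall i, 0 <= rho (S i) <= rho i / 2) -> forall eps, 0 < eps -> exists N, rho N < eps.
Proof.
  intros Hhalf eps He.
  assert (Hgeom : forall i, rho i <= (/ 2) ^ i * rho O).
  { induction i as [|i IH]; simpl; [lra|]. specialize (Hhalf i). lra. }
  assert (Hpos : 0 < rho O + 1) by (specialize (Hhalf O); lra).
  destruct (pow_lt_1_zero (/ 2) ltac:(rewrite Rabs_right; lra) (eps / (rho O + 1)))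
    as [N HN]; [apply Rdiv_lt_0_compat; lra|].
  exists N. specialize (HN N (le_n N)). specialize (Hgeom N).
  rewrite Rabs_right in HN by (apply Rle_ge, pow_le; lra).
  assert (Hb : (/ 2) ^ N * (rho O + 1) < eps).
  { apply Rmult_lt_reg_r with (/ (rho O + 1)); [apply Rinv_0_lt_compat; lra|].
    rewrite Rmult_assoc, Rinv_r by lra. lra. }
  assert (0 <= (/ 2) ^ N) by (apply pow_le; lra).
  nra.
Qed.

Lemma nested_balls {X : CBanach} (s : nat -> X) (rho : nat -> R) :
  (forall i, 0 <= rho i) ->
  (forall i, dist (s (S i)) (s i) + rho (S i) <= rho i) ->
  (forall eps, 0 < eps -> exists N, rho N < eps) ->
  exists l, Un_cv (fun k => dist (s k) l) 0 /\ forall i, dist l (s i) <= rho i.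
Proof.
  intros Hpos Hnest Hsmall.
  assert (Hchain : forall i j, dist (s (i + j)%nat) (s i) + rho (i + j)%nat <= rho i).
  { intros i j; induction j as [|j IH].
    - rewrite Nat.add_0_r, vsub_self, norm_zero. lra.
    - rewrite Nat.add_succ_r. specialize (Hnest (i + j)%nat).
      assert (H := dist_tri (s (S (i + j))) (s (i + j)%nat) (s i)). lra. }
  assert (Hfar : forall i p, (p >= i)%nat -> dist (s p) (s i) <= rho i).
  { intros i p Hp. replace p with (i + (p - i))%nat by lia.
    specialize (Hchain i (p - i)%nat). specialize (Hpos (i + (p - i))%nat). lra. }
  destruct (complete X s) as [l Hl].
  { intros eps He. destruct (Hsmall (eps / 2) ltac:(lra)) as [N HN].
    exists N. intros p q Hp Hq. fold (vsub (s p) (s q)).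
    assert (H := dist_tri (s p) (s N) (s q)). rewrite (dist_sym (s q) (s N)) in H.
    assert (Hp' := Hfar N p Hp). assert (Hq' := Hfar N q Hq). lra. }
  change (Un_cv (fun k => dist (s k) l) 0) in Hl.
  exists l. split; [exact Hl|].
  intro i. apply Rle_plus_epsilon. intros e He.
  destruct (eventually_below _ e Hl He) as [N HN].
  specialize (HN (i + N)%nat ltac:(lia)). cbv beta in HN.
  assert (H := dist_tri l (s (i + N)%nat) (s i)).
  rewrite (dist_sym (s (i + N)%nat) l) in H.
  specialize (Hfar i (i + N)%nat ltac:(lia)). lra.
Qed.

Section DiskStep.
Context {X : CBanach} (T : X -> X) (M : X -> Prop) (n : nat -> nat) (D1 D2 : X -> Prop).
Hypothesis T_add : forall x y, T (vadd x y) = vadd (T x) (T y).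
Hypothesis T_scal : forall a x, T (vscal a x) = vscal a (T x).
Variable K : R.
Hypothesis T_bound : forall x, norm (T x) <= K * norm x.
Hypothesis HM : closed_subspace M.
Hypothesis HD1 : dense_in D1 M.
Hypothesis Hab : forall y, D2 y -> exists xs : nat -> X,
  (forall k, M (xs k)) /\
  Un_cv (fun k => norm (xs k)) 0 /\
  Un_cv (fun k => norm (vsub (Nat.iter (n k) T (xs k)) y)) 0 /\
  (forall x, D1 x -> Un_cv (fun k => norm (Nat.iter (n k) T x) * norm (xs k)) 0).

(* Take [z = s + c xs_k] and [a = 1/c] with [c = 1 + 2 |T^(n k) s| / t]: then
   [a T^(n k) z = a T^(n k) s + T^(n k) xs_k], whose first term is below [t/2],
   while [|z - s| = c |xs_k|] is small by (a) and (b). *)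
Lemma disk_approximation (s y : X) (r t : R) : D1 s -> D2 y -> 0 < r -> 0 < t ->
  exists z k a, M z /\ dist z s < r /\ Cmod a <= 1 /\
    dist (vscal a (Nat.iter (n k) T z)) y < t.
Proof.
  intros Hs Hy Hr Ht.
  destruct HM as [_ [M_add [M_scal _]]].
  destruct (Hab y Hy) as [xs [Hxs_M [Hxs_0 [Hxs_y Hprod]]]].
  destruct (eventually_below _ (r / 2) Hxs_0) as [N1 H1]; [lra|].
  destruct (eventually_below _ (t / 2) Hxs_y) as [N2 H2]; [lra|].
  destruct (eventually_below _ (r * t / 4) (Hprod s Hs)) as [N3 H3]; [nra|].
  set (k := Nat.max N1 (Nat.max N2 N3)).
  specialize (H1 k ltac:(lia)). specialize (H2 k ltac:(lia)). specialize (H3 k ltac:(lia)).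
  cbv beta in H1, H2, H3.
  set (A := norm (Nat.iter (n k) T s)) in *.
  set (B := norm (xs k)) in *.
  assert (HA : 0 <= A) by apply norm_nonneg.
  assert (HB : 0 <= B) by apply norm_nonneg.
  set (c := 1 + 2 * A / t).
  assert (Hc : c * t = t + 2 * A) by (unfold c; field; lra).
  assert (Hc1 : 1 <= c) by (assert (0 <= 2 * A / t) by (apply Rmult_le_pos; [lra | apply Rlt_le, Rinv_0_lt_compat; lra]); unfold c; lra).
  assert (Ha : Cmod (/ c, 0) = / c) by (rewrite Cmod_real; apply Rabs_right, Rle_ge, Rlt_le, Rinv_0_lt_compat; lra).
  exists (vadd s (vscal (c, 0) (xs k))), k, (/ c, 0).
  split; [apply M_add; [apply (proj1 HD1), Hs | apply M_scal, Hxs_M]|].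
  split.
  { rewrite vsub_add_self, norm_scal, Cmod_real, Rabs_right by lra. fold B.
    apply Rmult_lt_reg_r with t; [lra|]. nra. }
  split; [rewrite Ha; rewrite <- Rinv_1; apply Rinv_le_contravar; lra|].
  rewrite iter_add, !iter_scal, vscal_distr_v, vscal_assoc by assumption.
  replace (Cmult (/ c, 0) (c, 0)) with Defs.C1 by (apply Cpair_eq; simpl; field; lra).
  rewrite vscal_1, vsub_addl.
  eapply Rle_lt_trans; [apply norm_triangle|].
  rewrite norm_scal, Ha. fold A.
  assert (HAc : / c * A < t / 2).
  { apply Rmult_lt_reg_l with c; [lra|].
    rewrite <- Rmult_assoc, Rinv_r, Rmult_1_l by lra. nra. }
  lra.
Qed.

Definition refines (s : X) (rho : R) (y : X) (t : R)
    (s' : X) (rho' : R) (k : nat) (a : Defs.C) : Prop :=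
  D1 s' /\ 0 < rho' /\ rho' <= rho / 2 /\ dist s' s + rho' <= rho /\ Cmod a <= 1 /\
  (forall w, dist w s' <= rho' -> dist (vscal a (Nat.iter (n k) T w)) y < t).

(* Every ball centred in [D1] can be refined towards any target of [D2]: approximate
   by [disk_approximation], move the centre into [D1] by density, and shrink the
   radius so that the Lipschitz bound on [a T^(n k)] keeps the error below [t]. *)
Lemma refinement_exists (s y : X) (rho t : R) : D1 s -> D2 y -> 0 < rho -> 0 < t ->
  exists s' rho' k a, refines s rho y t s' rho' k a.
Proof.
  intros Hs Hy Hrho Ht.
  destruct (disk_approximation s y (rho / 2) (t / 2) Hs Hy ltac:(lra) ltac:(lra))
    as [z [k [a [Hz [Hzs [Ha Hzy]]]]]].
  set (L := Rmax 1 K ^ n k).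
  assert (HL : 1 <= L) by (apply pow_R1_Rle, Rmax_l).
  set (delta := Rmin (rho / 4) (t / (4 * L))).
  assert (Hd1 : delta <= rho / 4) by apply Rmin_l.
  assert (Hd2 : L * delta <= t / 4).
  { assert (delta <= t / (4 * L)) by apply Rmin_r.
    assert (L * (t / (4 * L)) = t / 4) by (field; lra). nra. }
  assert (Hd : 0 < delta) by (apply Rmin_pos; [lra | apply Rdiv_lt_0_compat; lra]).
  destruct (proj2 HD1 z Hz delta Hd) as [s' [Hs' Hs'z]].
  exists s', delta, k, a.
  assert (Htri := dist_tri s' z s).
  do 5 (split; [assumption || lra|]).
  intros w Hw.
  assert (Hwz : dist w z <= 2 * delta) by (assert (H := dist_tri w s' z); lra).
  assert (Hlip := scaled_iter_lipschitz T T_add T_scal K T_bound (n k) a w z Ha).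
  fold L in Hlip.
  assert (H := dist_tri (vscal a (Nat.iter (n k) T w)) (vscal a (Nat.iter (n k) T z)) y).
  assert (0 <= dist w z) by apply norm_nonneg.
  nra.
Qed.

End DiskStep.

Lemma dependent_choice {A : Type} (P : A -> Prop) (Q : nat -> A -> A -> Prop) (a0 : A) :
  P a0 -> (forall i a, P a -> exists b, P b /\ Q i a b) ->
  exists f : nat -> A, f O = a0 /\ forall i, P (f i) /\ Q i (f i) (f (S i)).
Proof.
  intros H0 Hstep.
  destruct (choice (fun (ia : nat * A) b => P (snd ia) -> P b /\ Q (fst ia) (snd ia) b))
    as [g Hg].
  { intros [i a]. destruct (classic (P a)) as [Ha | Hna].
    - destruct (Hstep i a Ha) as [b Hb]. exists b. intros _. exact Hb.
    - exists a. intro Ha. contradiction. }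
  set (f := fix f i := match i with O => a0 | S i => g (i, f i) end).
  assert (Hinv : forall i, P (f i)).
  { intro i; induction i as [|i IH]; [exact H0 | exact (proj1 (Hg (i, f i) IH))]. }
  exists f. split; [reflexivity|].
  intro i. split; [apply Hinv | exact (proj2 (Hg (i, f i) (Hinv i)))].
Qed.

Definition tol (q : nat) : R := / INR (S q).

Lemma tol_pos q : 0 < tol q.
Proof. apply Rinv_0_lt_compat, lt_0_INR; lia. Qed.

Lemma tol_small eps : 0 < eps -> exists q, tol q < eps.
Proof.
  intro He. destruct (archimed_cor1 eps He) as [q [Hq Hq0]]. exists q.
  apply Rlt_trans with (/ INR q); [|exact Hq].
  apply Rinv_lt_contravar; [apply Rmult_lt_0_compat|]; apply lt_INR || apply lt_0_INR; lia.
Qed.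

(* In a separable space, a subset [D] dense in [M] contains a sequence dense in [M]:
   for each point [d p] of a dense sequence of [X] and each tolerance [tol q], pick a
   point of [D] within [tol q] of [d p] whenever [M] has one. *)
Lemma dense_sequence_in {X : CBanach} (M D : X -> Prop) :
  separable X -> dense_in D M -> (exists y0, D y0) ->
  exists e : nat -> X, (forall i, D (e i)) /\
    forall y, M y -> forall eps, 0 < eps -> exists i, dist (e i) y < eps.
Proof.
  intros [d Hd] HD [y0 Hy0].
  destruct (choice (fun (pq : nat * nat) y => D y /\
      ((exists y1, M y1 /\ dist y1 (d (fst pq)) < tol (snd pq)) ->
       dist y (d (fst pq)) < tol (snd pq)))) as [f Hf].
  { intros [p q]. simpl.
    destruct (classic (exists y1, M y1 /\ dist y1 (d p) < tol q)) as [[y1 [Hy1 Hy1d]] | Hno].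
    - destruct (proj2 HD y1 Hy1 (tol q - dist y1 (d p))) as [y [Hy Hyy1]]; [lra|].
      exists y. split; [exact Hy|]. intros _.
      assert (H := dist_tri y y1 (d p)). lra.
    - exists y0. split; [exact Hy0|]. intro Hyes. contradiction. }
  exists (fun i => f (Cantor.of_nat i)). split; [intro i; apply Hf|].
  intros y Hy eps He.
  destruct (tol_small (eps / 2) ltac:(lra)) as [q Hq].
  destruct (Hd y (tol q) (tol_pos q)) as [p Hp].
  exists (Cantor.to_nat (p, q)). rewrite Cantor.cancel_of_to.
  destruct (Hf (p, q)) as [_ Hclose]. simpl in Hclose.
  specialize (Hclose (ex_intro _ y (conj Hy Hp))).
  assert (H := dist_tri (f (p, q)) (d p) y). rewrite (dist_sym (d p) y) in Hp. lra.
Qed.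

Section Construction.
Context {X : CBanach} (T : X -> X) (M : X -> Prop) (n : nat -> nat) (D1 D2 : X -> Prop).
Hypothesis T_add : forall x y, T (vadd x y) = vadd (T x) (T y).
Hypothesis T_scal : forall a x, T (vscal a x) = vscal a (T x).
Variable K : R.
Hypothesis T_bound : forall x, norm (T x) <= K * norm x.
Hypothesis HM : closed_subspace M.
Hypothesis HD1 : dense_in D1 M.
Hypothesis Hab : forall y, D2 y -> exists xs : nat -> X,
  (forall k, M (xs k)) /\
  Un_cv (fun k => norm (xs k)) 0 /\
  Un_cv (fun k => norm (vsub (Nat.iter (n k) T (xs k)) y)) 0 /\
  (forall x, D1 x -> Un_cv (fun k => norm (Nat.iter (n k) T x) * norm (xs k)) 0).
Hypothesis Hc : forall k x, M x -> M (Nat.iter (n k) T x).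
Variable e : nat -> X.
Hypothesis e_in_D2 : forall j, D2 (e j).
Hypothesis e_dense : forall y, M y -> forall eps, 0 < eps -> exists j, dist (e j) y < eps.

(* Stage [i] of the construction serves the pair [(j, q) = Cantor.of_nat i]: it aims
   at the target [e j] with tolerance [tol q], so every pair is served once. *)
Definition target (i : nat) : X := e (fst (Cantor.of_nat i)).
Definition tolerance (i : nat) : R := tol (snd (Cantor.of_nat i)).

Record stage := Stage { center : X; radius : R; power : nat; scalar : Defs.C }.

Definition admissible (st : stage) : Prop := D1 (center st) /\ 0 < radius st.

Definition next_stage (i : nat) (st st' : stage) : Prop :=
  refines T n D1 (center st) (radius st) (target i) (tolerance i)
    (center st') (radius st') (power st') (scalar st').

(* The limit of a nested sequence of stages is an [M]-diskcyclic vector: it lies in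
   every ball, hence in [M], and at stage [i] some [a T^(n k)] maps it within
   [tolerance i] of [target i]; density of the targets concludes. *)
Lemma diskcyclic_of_stages (s0 : X) : D1 s0 -> M_diskcyclic T M.
Proof.
  intro Hs0.
  destruct (dependent_choice admissible next_stage (Stage s0 1 O Defs.C1)) as [f [_ Hf]].
  { split; [exact Hs0 | simpl; lra]. }
  { intros i st [Hs Hrho].
    destruct (refinement_exists T M n D1 D2 T_add T_scal K T_bound HM HD1 Hab
                (center st) (target i) (radius st) (tolerance i) Hs (e_in_D2 _) Hrho
                (tol_pos _)) as [s' [rho' [k [a Href]]]].
    exists (Stage s' rho' k a). split; [split; apply Href | exact Href]. }
  destruct (nested_balls (fun i => center (f i)) (fun i => radius (f i))) as [l [Hl Hball]].
  { intro i. apply Rlt_le, (Hf i). }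
  { intro i. apply (Hf i). }
  { apply halving_vanishes. intro i. destruct (Hf i) as [_ [_ [Hpos [Hhalf _]]]]. lra. }
  destruct HM as [_ [_ [M_scal M_closed]]].
  assert (Hl_M : M l) by (apply (M_closed (fun i => center (f i)) l); [intro i; apply (proj1 HD1), (Hf i) | exact Hl]).
  exists l. intros y Hy eps He.
  destruct (tol_small (eps / 2) ltac:(lra)) as [q Hq].
  destruct (e_dense y Hy (eps / 2) ltac:(lra)) as [j Hj].
  set (i := Cantor.to_nat (j, q)).
  destruct (Hf i) as [_ [_ [_ [_ [_ [Ha Hmap]]]]]].
  specialize (Hmap l (Hball (S i))).
  assert (Hi : Cantor.of_nat i = (j, q)) by apply Cantor.cancel_of_to.
  unfold target, tolerance in Hmap. rewrite Hi in Hmap. simpl in Hmap.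
  exists (scalar (f (S i))), (n (power (f (S i)))).
  split; [exact Ha|]. split; [apply M_scal, Hc, Hl_M|].
  assert (H := dist_tri (vscal (scalar (f (S i))) (Nat.iter (n (power (f (S i)))) T l)) (e j) y).
  lra.
Qed.

End Construction.

Theorem mainTheorem6 (X : CBanach) (T : X -> X) (M : X -> Prop)
  (n : nat -> nat) (D1 D2 : X -> Prop)
  (HXsep : separable X) (HXinf : infinite_dimensional X)
  (HT : bounded_linear T)
  (HM : closed_subspace M) (HMnt : nontrivial M)
  (Hn_incr : forall k, (n k < n (S k))%nat) (Hn_pos : forall k, (1 <= n k)%nat)
  (HD1 : dense_in D1 M) (HD2 : dense_in D2 M)
  (Hab : forall y, D2 y -> exists xs : nat -> X,
      (forall k, M (xs k)) /\
      Un_cv (fun k => norm (xs k)) 0 /\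
      Un_cv (fun k => norm (vsub (Nat.iter (n k) T (xs k)) y)) 0 /\
      (forall x, D1 x -> Un_cv (fun k => norm (Nat.iter (n k) T x) * norm (xs k)) 0))
  (Hc : forall k x, M x -> M (Nat.iter (n k) T x)) :
  M_diskcyclic T M.
Proof.
  destruct HT as [T_add [T_scal [K T_bound]]].
  (* Both dense sets are nonempty since [M] contains 0. *)
  assert (M0 : M vzero) by apply HM.
  destruct (proj2 HD1 vzero M0 1 ltac:(lra)) as [s0 [Hs0 _]].
  destruct (proj2 HD2 vzero M0 1 ltac:(lra)) as [y0 [Hy0 _]].
  destruct (dense_sequence_in M D2 HXsep HD2 (ex_intro _ y0 Hy0)) as [e [He_D2 He_dense]].
  exact (diskcyclic_of_stages T M n D1 D2 T_add T_scal K T_bound HM HD1 Hab Hc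
           e He_D2 He_dense s0 Hs0).
Qed.
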